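(* Let $S$ be a finite semigroup. The following are equivalent: (i) $\mathbb{N}\times S$ has only countably many subdirect products; (ii) $\mathbb{N}\times S$ has only countably many pairwise non-isomorphic subdirect products; (iii) for every $s\in S$ there exists $t\in S$ such that $ts=s$ or $st=s$.
   Context: $\mathbb{N}=\{1,2,3,\dots\}$ is the free monogenic semigroup (positive integers under addition); $\mathbb{N}\times S$ is the direct product with componentwise operation. A subdirect product of $\mathbb{N}\times S$ is a subsemigroup $U\leq \mathbb{N}\times S$ whose projection onto the first coordinate is all of $\mathbb{N}$ and whose projection onto the second coordinate is all of $S$. *)

From mathcomp Require Import all_boot.
From mathcomp Require Import boolp classical_sets cardinality.
Set Implicit Arguments. Unset Strict Implicit. Unset Printing Implicit Defensive.
Local Open Scope classical_set_scope.

(* The free monogenic semigroup N = {1,2,3,...} under addition is modelled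
   by the positive elements of nat; N x S is modelled inside nat * S, with
   componentwise operation. *)

Definition prodop (S : Type) (op : S -> S -> S) (x y : nat * S) : nat * S :=
  (x.1 + y.1, op x.2 y.2).

Definition subdirect (S : Type) (op : S -> S -> S) (U : set (nat * S)) : Prop :=
  [/\ (forall x, U x -> 0 < x.1),
      (forall x y, U x -> U y -> U (prodop op x y)),
      (forall n, 0 < n -> exists s, U (n, s)) &
      (forall s, exists n, U (n, s))].

Definition semigroup_iso (S : Type) (op : S -> S -> S) (U V : set (nat * S)) : Prop :=
  exists f : nat * S -> nat * S,
    [/\ (forall x, U x -> V (f x)),
        (forall x y, U x -> U y -> f x = f y -> x = y),
        (forall y, V y -> exists2 x, U x & f x = y) &
        (forall x y, U x -> U y -> f (prodop op x y) = prodop op (f x) (f y))].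

From mathcomp Require Import all_boot.
From mathcomp Require Import boolp classical_sets cardinality.
From mathcomp Require Import zify.
Set Implicit Arguments. Unset Strict Implicit.
Local Open Scope classical_set_scope.

(* If every s has a local identity t (ts = s or st = s), pick (m, t) in a
   subdirect product U: the fibre {n | (n, s) in U} is closed under n |-> n + m,
   hence determined by its least element in each residue class modulo m, so U
   is determined by finitely much data.

   Otherwise fix s without a local identity. By finiteness s <> asc for all
   a, c (else e s = s for an idempotent power e of a), so s is not J-below sy
   or ys. For X a set of naturals let U_X be generated by (1, x) for s not
   J-below x, (2, x) for s J-below x, and (2k+3, s) for k in X. Elements of U_X
   whose second coordinate is J-above s but not s have even first coordinate,
   so each (2k+3, s) is indecomposable; if s^M is idempotent, M(2k+3) is the
   largest b such that (2k+3, s)^M is a b-th power in U_X, as witnessed by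
   (1, s^M). The set of these maximal exponents over all indecomposable
   elements is an isomorphism invariant that recovers X, so there are
   uncountably many isomorphism types. *)

Section Powers.
Variables (T : Type) (mul : T -> T -> T).

(* Only positive exponents are meaningful: [spow x 0] is [x]. *)
Definition spow (x : T) (n : nat) : T := iter n.-1 (mul x) x.

Lemma spowS x n : spow x n.+2 = mul x (spow x n.+1).
Proof. by []. Qed.

Lemma spow_idem e n : mul e e = e -> spow e n = e.
Proof. by move=> ee; elim: n => [|[|n] IH] //; rewrite spowS IH. Qed.

Definition mul_closed (U : set T) := forall x y, U x -> U y -> U (mul x y).

Lemma spow_closed (U : set T) x n : mul_closed U -> U x -> U (spow x n).
Proof. by move=> Ucl Ux; elim: n => [|[|n] IH] //; rewrite spowS; apply: Ucl. Qed.

Hypothesis mulA : associative mul.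

Lemma spowD x a b : 0 < a -> 0 < b -> mul (spow x a) (spow x b) = spow x (a + b).
Proof.
case: a b => [|a] [|b] // _ _.
by elim: a => [|a IH]; rewrite ?add1n // spowS -mulA IH !addSn.
Qed.

Lemma spowC x n : 0 < n -> mul (spow x n) x = mul x (spow x n).
Proof.
move=> n0; rewrite -[mul _ x]/(mul (spow x n) (spow x 1)).
by rewrite -[mul x _]/(mul (spow x 1) (spow x n)) !spowD // addnC.
Qed.

Lemma spow_periodic x a p : 0 < a -> spow x (a + p) = spow x a ->
  forall c m, a <= m -> spow x (m + c * p) = spow x m.
Proof.
move=> a0 period.
have shift m : a <= m -> spow x (m + p) = spow x m.
  move=> am; have [->|m_neq_a] := eqVneq m a; first exact: period.
  have ma0 : 0 < m - a by lia.
  rewrite -(subnK am) -addnA -(@spowD x (m - a) (a + p)) ?addn_gt0 ?a0 //.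
  by rewrite period spowD.
elim=> [|c IH] m am; first by rewrite addn0.
by rewrite mulSn addnA IH ?shift //; lia.
Qed.

End Powers.

Section FinitePowers.
Variables (T : finType) (mul : T -> T -> T).

Lemma exists_spow_period x :
  exists a p, [/\ 0 < a, 0 < p & spow mul x (a + p) = spow mul x a].
Proof.
pose f (i : 'I_#|T|.+1) := spow mul x i.+1.
have /injectivePn [i [j neq_ij fij]] : ~~ injectiveb f.
  by apply/injectiveP => /leq_card; rewrite card_ord ltnn.
wlog lt_ij : i j neq_ij fij / i < j.
  move=> wlog_ij; move: (neq_ij); rewrite neq_ltn => /orP[] lt.
    exact: (wlog_ij i j).
  by apply: (wlog_ij j i); rewrite 1?eq_sym.
exists i.+1, (j - i); split; rewrite // ?subn_gt0 //.
by rewrite [RHS]fij; congr spow; lia.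
Qed.

Lemma exists_idempotent_spow x : associative mul ->
  exists2 M, 1 < M & mul (spow mul x M) (spow mul x M) = spow mul x M.
Proof.
move=> mulA; have [a [p [a0 p0 period]]] := exists_spow_period x.
exists (2 * (a * p)); first nia.
rewrite spowD ?muln_gt0 ?a0 ?p0 //.
have -> : 2 * (a * p) + 2 * (a * p) = 2 * (a * p) + 2 * a * p by nia.
by rewrite (spow_periodic mulA a0 period) //; nia.
Qed.

End FinitePowers.

Section Invariant.
Variables (T : Type) (mul : T -> T -> T).

Definition decomposable (U : set T) u := exists p q, [/\ U p, U q & u = mul p q].

Definition pow_degrees (U : set T) w :=
  [set b | 0 < b /\ exists2 v, U v & spow mul v b = w].

Definition max_pow_degrees (U : set T) M := [set b | exists u,
  [/\ U u, ~ decomposable U u, pow_degrees U (spow mul u M) b &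
      forall b', pow_degrees U (spow mul u M) b' -> b' <= b]].

End Invariant.

Section Isomorphism.
Variables (T T' : Type) (mul : T -> T -> T) (mul' : T' -> T' -> T').

Definition iso_on (U : set T) (V : set T') (f : T -> T') :=
  [/\ (forall x, U x -> V (f x)),
      (forall x y, U x -> U y -> f x = f y -> x = y),
      (forall y, V y -> exists2 x, U x & f x = y) &
      (forall x y, U x -> U y -> f (mul x y) = mul' (f x) (f y))].

Variables (U : set T) (V : set T') (f : T -> T').
Hypotheses (Ucl : mul_closed mul U) (fiso : iso_on U V f).

Lemma iso_spow u n : U u -> f (spow mul u n) = spow mul' (f u) n.
Proof.
case: fiso => _ _ _ fmul Uu; elim: n => [|[|n] IH] //.
by rewrite !spowS fmul ?IH //; apply: spow_closed.
Qed.

Lemma iso_decomposable u : U u -> decomposable mul' V (f u) <-> decomposable mul U u.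
Proof.
case: fiso => fUV finj fsurj fmul Uu; split.
- move=> [p' [q' [/fsurj[p Up <-] /fsurj[q Uq <-] fupq]]].
  by exists p, q; split; rewrite // (finj _ _ Uu (Ucl Up Uq)) ?fmul.
- move=> [p [q [Up Uq ->]]].
  by exists (f p), (f q); split; [exact: fUV | exact: fUV | exact: fmul].
Qed.

Lemma iso_pow_degrees w : U w -> pow_degrees mul' V (f w) = pow_degrees mul U w.
Proof.
case: fiso => fUV finj fsurj _ Uw; rewrite predeqE => b; split.
- move=> [b0 [v' /fsurj[v Uv <-]]]; rewrite -iso_spow // => fvw.
  by split => //; exists v; rewrite // (finj _ _ (spow_closed _ Ucl Uv) Uw).
- by move=> [b0 [v Uv <-]]; split => //; exists (f v); [exact: fUV | rewrite iso_spow].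
Qed.

Lemma iso_max_pow_degrees M : max_pow_degrees mul' V M = max_pow_degrees mul U M.
Proof.
case: fiso => fUV _ fsurj _; rewrite predeqE => b.
have transfer u : U u -> spow mul' (f u) M = f (spow mul u M).
  by move=> Uu; rewrite iso_spow.
split.
- move=> [u' [/fsurj[u Uu <-]]]; rewrite iso_decomposable // transfer // iso_pow_degrees;
    last exact: spow_closed.
  by move=> *; exists u.
- move=> [u [Uu]]; rewrite -iso_decomposable // -iso_pow_degrees -?transfer //;
    last exact: spow_closed.
  by move=> *; exists (f u); split => //; exact: fUV.
Qed.

End Isomorphism.

Lemma spow_prodE (S : Type) (op : S -> S -> S) v b : 0 < b ->
  spow (prodop op) v b = (b * v.1, spow op v.2 b).
Proof.
case: b => // b _; elim: b => [|b IH]; first by rewrite mul1n; case: v.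
by rewrite spowS IH /prodop /= mulSn.
Qed.

Lemma pow_degrees_le (S : Type) (op : S -> S -> S) (U : set (nat * S)) u M b :
  (forall x, U x -> 0 < x.1) -> 0 < M ->
  pow_degrees (prodop op) U (spow (prodop op) u M) b -> b <= M * u.1.
Proof.
move=> Upos M0 [b0 [v /Upos v0]]; rewrite !spow_prodE // => -[<- _].
exact: leq_pmulr.
Qed.

Section JOrder.
Variables (T : Type) (mul : T -> T -> T).
Hypothesis mulA : associative mul.

(* [Jle s x] is s <=_J x in Green's J-preorder, i.e. s lies in S^1 x S^1. *)
Definition Jle (s x : T) := [\/ s = x, (exists u, s = mul u x),
  (exists v, s = mul x v) | (exists u v, s = mul u (mul x v))].

Lemma Jle_mull s x y : Jle s (mul x y) -> Jle s x.
Proof.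
case=> [->|[u ->]|[v ->]|[u [v ->]]].
- by apply: Or43; exists y.
- by apply: Or44; exists u, y.
- by apply: Or43; exists (mul y v); rewrite !mulA.
- by apply: Or44; exists u, (mul y v); rewrite !mulA.
Qed.

Lemma Jle_mulr s x y : Jle s (mul x y) -> Jle s y.
Proof.
case=> [->|[u ->]|[v ->]|[u [v ->]]].
- by apply: Or42; exists x.
- by apply: Or42; exists (mul u x); rewrite !mulA.
- by apply: Or44; exists x, v.
- by apply: Or44; exists (mul u x), v; rewrite !mulA.
Qed.

End JOrder.

Section NoLocalIdentity.
Variables (S : finType) (op : S -> S -> S) (s : S).
Hypotheses (opA : associative op) (no_local_id : forall t, op t s <> s /\ op s t <> s).

Lemma sandwich_neq a c : op a (op s c) <> s.
Proof.
move=> sas; have [M M1 idemM] := exists_idempotent_spow a opA.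
have sandwich n : 0 < n -> op (spow op a n) (op s (spow op c n)) = s.
  case: n => // n _; elim: n => [|n IH] //.
  rewrite !spowS -(spowC opA c) //.
  transitivity (op a (op (op (spow op a n.+1) (op s (spow op c n.+1))) c)).
    by rewrite !opA.
  by rewrite IH.
apply: (proj1 (no_local_id (spow op a M))).
by rewrite -(sandwich M (ltnW M1)) opA idemM.
Qed.

Lemma not_Jle_mulr y : ~ Jle op s (op s y).
Proof.
case=> [sy|[u usy]|[v syv]|[u [v usyv]]].
- exact: (proj2 (no_local_id y)) (esym sy).
- exact: (sandwich_neq (esym usy)).
- by apply: (proj2 (no_local_id (op y v))); rewrite opA -syv.
- by apply: (@sandwich_neq u (op y v)); rewrite {2}usyv !opA.
Qed.

Lemma not_Jle_mull y : ~ Jle op s (op y s).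
Proof.
case=> [ys|[u uys]|[v ysv]|[u [v uysv]]].
- exact: (proj1 (no_local_id y)) (esym ys).
- by apply: (proj1 (no_local_id (op u y))); rewrite -opA -uys.
- by apply: (@sandwich_neq y v); rewrite {2}ysv !opA.
- by apply: (@sandwich_neq (op u y) v); rewrite {2}uysv !opA.
Qed.

Lemma Jle_mul_neq x y : Jle op s (op x y) -> x <> s /\ y <> s.
Proof.
move=> sxy; split=> eq_s; move: sxy; rewrite eq_s.
  exact: not_Jle_mulr.
exact: not_Jle_mull.
Qed.

Inductive gen (X : set nat) : nat * S -> Prop :=
| gen_low x : ~ Jle op s x -> gen X (1, x)
| gen_high x : Jle op s x -> gen X (2, x)
| gen_code k : X k -> gen X (k.*2.+3, s)
| gen_mul u v : gen X u -> gen X v -> gen X (prodop op u v).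

Variable X : set nat.

Lemma gen_pos u : gen X u -> 0 < u.1.
Proof. by elim=> //= p q _ p0 _ q0; rewrite addn_gt0 p0. Qed.

Lemma gen_subdirect : subdirect op (gen X).
Proof.
split; [exact: gen_pos | exact: gen_mul | move=> n n0 | move=> x].
- have low_ss := gen_low X (@not_Jle_mulr s).
  exists (spow op (op s s) n).
  by have := spow_closed n (@gen_mul X) low_ss; rewrite spow_prodE // muln1.
- have [sx|nsx] := pselect (Jle op s x).
    by exists 2; apply: gen_high.
  by exists 1; apply: gen_low.
Qed.

(* Every factor of such an element is again J-above s and different from s,
   so only the generators (2, x) can occur. *)
Lemma gen_Jle_even u : gen X u -> Jle op s u.2 -> u.2 <> s -> ~~ odd u.1.
Proof.
elim=> //= p q _ IHp _ IHq s_pq _.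
have [ps qs] := Jle_mul_neq s_pq; rewrite oddD.
have /negPf-> := IHp (Jle_mull opA s_pq) ps.
by have /negPf-> := IHq (Jle_mulr opA s_pq) qs.
Qed.

Lemma gen_code_indecomposable k : ~ decomposable (prodop op) (gen X) (k.*2.+3, s).
Proof.
move=> [p [q [Up Uq [pq1 pq2]]]].
have s_pq : Jle op s (op p.2 q.2) by rewrite -pq2; apply: Or41.
have [ps qs] := Jle_mul_neq s_pq.
have /negPf p_even := gen_Jle_even Up (Jle_mull opA s_pq) ps.
have /negPf q_even := gen_Jle_even Uq (Jle_mulr opA s_pq) qs.
by have := congr1 odd pq1; rewrite oddD /= odd_double p_even q_even.
Qed.

Variable M : nat.
Hypotheses (M_gt1 : 1 < M) (idemM : op (spow op s M) (spow op s M) = spow op s M).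

Lemma gen_code_pow_degree k :
  pow_degrees (prodop op) (gen X) (spow (prodop op) (k.*2.+3, s) M) (M * k.*2.+3).
Proof.
have M0 := ltnW M_gt1; split; first by rewrite muln_gt0 M0.
exists (1, spow op s M).
  by apply: gen_low; case: M M_gt1 => [|[|m]] // _; rewrite spowS; apply: not_Jle_mulr.
by rewrite !spow_prodE ?muln_gt0 ?M0 //= muln1 spow_idem.
Qed.

Lemma max_pow_degrees_gen k :
  max_pow_degrees (prodop op) (gen X) M (M * k.*2.+3) <-> X k.
Proof.
have bound := pow_degrees_le (op := op) gen_pos (ltnW M_gt1).
split=> [[u [Uu indec_u deg_u max_u]] | Xk].
- have := bound _ _ deg_u.
  case: Uu indec_u max_u => [x _|x _|k' Xk'|p q Up Uq] /= indec_u max_u le_u.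
  + by nia.
  + by nia.
  + have ge_u := max_u _ (gen_code_pow_degree k').
    have : M * k.*2.+3 == M * k'.*2.+3 by rewrite eqn_leq le_u ge_u.
    by rewrite eqn_pmul2l ?(ltnW M_gt1) // => /eqP code_eq; have -> : k = k' by lia.
  + by case: indec_u; exists p, q.
- exists (k.*2.+3, s); split; [exact: gen_code | exact: gen_code_indecomposable |
    exact: gen_code_pow_degree | by move=> b' /bound].
Qed.

End NoLocalIdentity.

Lemma setnat_uncountable : ~ countable [set: set nat].
Proof.
move=> /countable_injP [f f_inj].
have {}f_inj A B : f A = f B -> A = B by apply: f_inj; rewrite in_setE.
pose D : set nat := fun n => ~ exists2 A, f A = n & A n.
have [DfD|nDfD] := pselect (D (f D)); first by apply: (DfD); exists D.
by apply: (nDfD) => -[A /f_inj->].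
Qed.

Lemma local_identities_of_countable_iso_classes (S : finType) (op : S -> S -> S) :
  associative op ->
  (exists C : set (set (nat * S)),
     [/\ countable C, (forall V, C V -> subdirect op V) &
         (forall U, subdirect op U -> exists2 V, C V & semigroup_iso op U V)]) ->
  forall s : S, exists t : S, op t s = s \/ op s t = s.
Proof.
move=> opA [C [C_count _ C_iso]] s; apply: contrapT => no_t.
have no_local_id t : op t s <> s /\ op s t <> s.
  by split=> ts_s; apply: no_t; exists t; [left | right].
have [M M_gt1 idemM] := exists_idempotent_spow s opA.
have [g gP] : {g : set nat -> set (nat * S) &
                forall X, C (g X) /\ semigroup_iso op (gen op s X) (g X)}.
  apply: (choice (P := fun X V => C V /\ semigroup_iso op (gen op s X) V)) => X.
  by have [V CV isoV] := C_iso _ (gen_subdirect opA no_local_id X); exists V.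
have g_inj X Y : g X = g Y -> X = Y.
  have invariant Z : max_pow_degrees (prodop op) (g Z) M =
                     max_pow_degrees (prodop op) (gen op s Z) M.
    have [_ [f fiso]] := gP Z.
    exact: (iso_max_pow_degrees (mul' := prodop op) (@gen_mul _ op s Z) fiso).
  move=> gXY; rewrite predeqE => k.
  by rewrite -(max_pow_degrees_gen opA no_local_id X M_gt1 idemM)
             -(max_pow_degrees_gen opA no_local_id Y M_gt1 idemM) -!invariant gXY.
apply: setnat_uncountable; move: C_count => /countable_injP [h h_inj].
apply/countable_injP; exists (h \o g) => X Y _ _ /= hgXY.
by apply/g_inj/h_inj; rewrite // in_setE; apply: (gP _).1.
Qed.

(* The set of naturals coded by a period m and, for each residue r < m, the
   least element of the residue class of r, if there is one. *)
Definition residue_set (c : nat * seq (option nat)) : set nat :=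
  [set n | if nth None c.2 (n %% c.1) is Some a then a <= n else false].

Definition least_in_class (A : set nat) (m r : nat) : option nat :=
  match pselect (exists n, (n %% m == r) && `[< A n >]) with
  | left ex => Some (ex_minn ex)
  | right _ => None
  end.

Lemma addn_closed_residue_set (A : set nat) m : 0 < m ->
  (forall n, A n -> A (n + m)) -> A = residue_set (m, mkseq (least_in_class A m) m).
Proof.
move=> m0 A_addm; rewrite predeqE => n.
rewrite /residue_set /= nth_mkseq ?ltn_pmod // /least_in_class.
case: pselect => [ex|no_ex]; last first.
  by split=> // An; case: no_ex; exists n; rewrite eqxx; apply/asboolP.
case: ex_minnP => a /andP[/eqP a_mod /asboolP Aa] a_min; split=> [An|le_an].
  by apply: a_min; rewrite eqxx; apply/asboolP.
have /divnK n_a : m %| n - a by rewrite -eqn_mod_dvd // a_mod.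
have [q ->] : exists q, n = a + q * m by exists ((n - a) %/ m); rewrite n_a subnKC.
elim: q => [|q IH]; first by rewrite addn0.
by rewrite mulSn addnCA addnC; apply: A_addm.
Qed.

Lemma subdirect_fibre_addn_closed (S : Type) (op : S -> S -> S)
    (U : set (nat * S)) s t m :
  subdirect op U -> op t s = s \/ op s t = s -> U (m, t) ->
  forall n, U (n, s) -> U (n + m, s).
Proof.
move=> [_ Ucl _ _] [ts_s|st_s] Umt n Uns.
- by have := Ucl _ _ Umt Uns; rewrite /prodop /= ts_s addnC.
- by have := Ucl _ _ Uns Umt; rewrite /prodop /= st_s.
Qed.

Definition fibrewise_residue_set (S : finType) (c : {ffun S -> nat * seq (option nat)}) :
  set (nat * S) := [set u | residue_set (c u.2) u.1].

Lemma countable_subdirect_of_local_identities (S : finType) (op : S -> S -> S) :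
  (forall s : S, exists t : S, op t s = s \/ op s t = s) ->
  countable [set U : set (nat * S) | subdirect op U].
Proof.
move=> local_id.
have sub : [set U | subdirect op U] `<=` range (@fibrewise_residue_set S).
  move=> U U_sub; have [U_pos _ _ U_surj] := U_sub.
  have code s : exists c, [set n | U (n, s)] = residue_set c.
    have [t ts] := local_id s; have [m Umt] := U_surj t.
    exists (m, mkseq (least_in_class [set n | U (n, s)] m) m).
    apply: addn_closed_residue_set; first exact: U_pos Umt.
    exact: subdirect_fibre_addn_closed U_sub ts Umt.
  have [c cP] := choice code.
  exists [ffun s => c s] => //; rewrite predeqE => -[n x].
  by rewrite /fibrewise_residue_set /= ffunE -cP.
apply: (sub_countable (subset_card_le sub)).
apply: (sub_countable (card_image_le _ _)).
exact: countableP.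
Qed.

Unset Implicit Arguments. Set Strict Implicit.

Theorem theoremE (S : finType) (op : S -> S -> S) (op_assoc : associative op) :
  [<-> countable [set U : set (nat * S) | subdirect op U];
       exists C : set (set (nat * S)),
         [/\ countable C,
             (forall V, C V -> subdirect op V) &
             (forall U, subdirect op U -> exists2 V, C V & semigroup_iso op U V)];
       forall s : S, exists t : S, op t s = s \/ op s t = s].
Proof.
tfae.
- move=> countable_subdirect.
  exists [set U : set (nat * S) | subdirect op U]; split => // U U_sub.
  by exists U => //; exists id; split => // y Uy; exists y.
- exact: local_identities_of_countable_iso_classes.
- exact: countable_subdirect_of_local_identities.
Qed.
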